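(* Let $\alpha=(\alpha_1,\ldots,\alpha_n)$ be a composition, and suppose there is $1\le r\le n-1$ with $\alpha_r<\alpha_{r+1}$. Let $\alpha'=\alpha\cdot s_r$ and $V(\gamma)=\{\beta\colon\beta\le\gamma\}$. Then \[V(\alpha)=V(\alpha')\cup\{v\cdot s_r\colon v\in V(\alpha')\}.\]
   Context: A composition is a sequence of $n$ nonnegative integers. For $v\in\mathbb{R}^n$ and $w=w_1\cdots w_n\in S_n$, $v\cdot w=(v_{w_1},\ldots,v_{w_n})$; $s_r$ is the adjacent transposition $(r,r+1)$, so $v\cdot s_r$ swaps the $r$-th and $(r+1)$-th entries. $\lambda(\gamma)$ is the weakly decreasing rearrangement of $\gamma$, and $w(\gamma)$ is the unique minimal-length permutation with $\lambda(\gamma)\cdot w(\gamma)=\gamma$. For compositions $\beta,\gamma$ of length $n$, $\beta\le\gamma$ means $\lambda(\beta)=\lambda(\gamma)$ and $w(\beta)\le w(\gamma)$ in the (strong) Bruhat order on $S_n$. *)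

From mathcomp Require Import all_boot all_order all_fingroup.
From Stdlib Require Import Relations.
Set Implicit Arguments. Unset Strict Implicit. Unset Printing Implicit Defensive.

(* A composition of length n: a finite function 'I_n -> nat
   (entry i, 0-indexed, is alpha_{i+1}). *)
Definition compo (n : nat) := {ffun 'I_n -> nat}.

Definition cact n (v : compo n) (w : 'S_n) : compo n := [ffun i => v (w i)].

Definition lam n (g : compo n) : compo n :=
  [ffun i : 'I_n => nth 0 (sort geq (codom g)) i].

Definition plen n (w : 'S_n) : nat :=
  #|[set p : 'I_n * 'I_n | (p.1 < p.2) && (w p.2 < w p.1)]|.

Definition is_minperm n (g : compo n) (w : 'S_n) : bool :=
  (cact (lam g) w == g) &&
  [forall w' : 'S_n, (cact (lam g) w' == g) ==> (plen w <= plen w')].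

Definition wperm n (g : compo n) : 'S_n := odflt 1%g [pick w | is_minperm g w].

Definition bruhat_step n (w v : 'S_n) : Prop :=
  exists i j : 'I_n, i != j /\ (forall k, v k = w (tperm i j k)) /\ plen w < plen v.

Definition bruhat_le n : relation 'S_n := clos_refl_trans _ (@bruhat_step n).

Definition comp_le n (b g : compo n) : Prop :=
  lam b = lam g /\ bruhat_le (wperm b) (wperm g).

Definition Vset n (g : compo n) : compo n -> Prop := fun b => comp_le b g.

(* Write w(γ) for the minimal-length permutation sorting λ(γ) into γ. It is the
   permutation w with λ(γ)_(w k) = γ_k that keeps the positions of equal entries in
   order, so when γ_r <> γ_(r+1) we get w(γ s_r) = w(γ) s_r.  Here w(α) has a descent
   at s = s_r and w(α') = w(α) s an ascent, and the statement reduces to the lifting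
   property of the Bruhat order: if u <= w, then u s <= w s when u and w are both
   ascents or both descents at s, and u <= w s when u is an ascent and w a descent.
   The latter follows by induction along a chain of Bruhat steps, since a step
   m < m t with t <> s is carried to the step m s < m s (s t s). *)
From Stdlib Require Import Relations.
From mathcomp Require Import all_boot all_fingroup zify.
Set Implicit Arguments. Unset Strict Implicit. Unset Printing Implicit Defensive.
Local Open Scope group_scope.

Section Permutations.
Variable n : nat.
Implicit Types (x y : 'S_n) (i j : 'I_n).

Lemma perm_ltn_eq x y : (forall i j, (x i < x j) = (y i < y j)) -> x = y.
Proof.
move=> xy; apply/permP => k.
pose below (a : 'I_n) := #|[set m : 'I_n | m < a]|.
have belowE (z : 'S_n) : #|[set i | z i < z k]| = below (z k).
  rewrite -[RHS](card_preimset _ (@perm_inj _ z)).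
  by apply: eq_card => i; rewrite !inE.
have below_mono (a b : 'I_n) : a < b -> below a < below b.
  move=> lt_ab; apply/proper_card/properP; split; last by exists a; rewrite !inE ?ltnn.
  by apply/subsetP => m; rewrite !inE => /ltn_trans; apply.
have : below (x k) = below (y k).
  by rewrite -!belowE; apply: eq_card => i; rewrite !inE xy.
by case: (ltngtP (x k) (y k)) => [/below_mono|/below_mono|/val_inj //] + eq_b;
  rewrite eq_b ltnn.
Qed.

Lemma tperm_mulJ a b i j x :
  tperm a b * (tperm i j * x) = tperm (tperm a b i) (tperm a b j) * (tperm a b * x).
Proof. by rewrite -tpermJ conjgE tpermV -!mulgA tpermKg. Qed.

Lemma nat_of_tperm i j k : nat_of_ord (tperm i j k) =
  if nat_of_ord k == i then nat_of_ord j
  else if nat_of_ord k == j then nat_of_ord i else nat_of_ord k.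
Proof.
rewrite !val_eqE; case: tpermP => [->|->|/eqP/negbTE-> /eqP/negbTE->]; rewrite ?eqxx //.
by case: eqP => // ->.
Qed.

Definition inversions x := [set p : 'I_n * 'I_n | (p.1 < p.2) && (x p.2 < x p.1)].

(* f injects the inversions of x into those of tperm i j * x other than (i, j):
   a pair is moved by tperm i j when that keeps it increasing, and kept otherwise. *)
Lemma plen_tperm_mul x i j : i < j -> x i < x j -> plen x < plen (tperm i j * x).
Proof.
move=> lt_ij lt_xij; set t := tperm i j; set y := t * x.
have yE k : y k = x (t k) by rewrite permM.
pose f (p : 'I_n * 'I_n) := if t p.1 < t p.2 then (t p.1, t p.2) else p.
have f_inj : {in inversions x &, injective f}.
  move=> [a b] [c d]; rewrite !inE /f /= => /andP[ab _] /andP[cd _].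
  case: ifP => tab; case: ifP => tcd // [ac bd].
  - by rewrite -[a](tpermK i j) -[b](tpermK i j) -/t ac bd !tpermK.
  - by move: tcd; rewrite -ac -bd !tpermK ab.
  - by move: tab; rewrite ac bd !tpermK cd.
have ij_inv : (i, j) \in inversions y by rewrite inE /= !yE tpermL tpermR lt_xij andbT.
have f_sub : f @: inversions x \subset inversions y :\ (i, j).
  apply/subsetP=> _ /imsetP[[a b] + ->]; rewrite !inE /f /= => /andP[ab xba].
  case: ifP => tab; rewrite /= ?tab ?ab !yE ?tpermK ?xba ?andbT.
    apply/eqP=> -[/(congr1 t) ta /(congr1 t) tb]; rewrite !tpermK in ta tb.
    by move: ab; rewrite ta tb tpermL tpermR; lia.
  apply/andP; split; first by apply/eqP=> -[ta tb]; move: xba; rewrite ta tb; lia.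
  move: ab xba tab; rewrite /t.
  by case: (tpermP i j a) => [->|->|_ _]; case: (tpermP i j b) => [->|->|_ _]; lia.
rewrite -[plen x]/#|inversions x| -[plen y]/#|inversions y|.
rewrite -(card_in_imset f_inj) (cardsD1 (i, j) (inversions y)) ij_inv.
by rewrite add1n ltnS subset_leq_card.
Qed.

Lemma plen_tperm_mulE x i j :
  i < j -> (plen x < plen (tperm i j * x)) = (x i < x j).
Proof.
move=> lt_ij; apply/idP/idP => [lt_len|]; last exact: plen_tperm_mul.
case: (ltngtP (x i) (x j)) => // [gt_xij|/val_inj/perm_inj eq_ij]; last first.
  by move: lt_ij; rewrite eq_ij ltnn.
have := plen_tperm_mul (x := tperm i j * x) lt_ij.
rewrite !permM tpermL tpermR tpermKg => /(_ gt_xij).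
by rewrite ltnNge ltnW.
Qed.

End Permutations.


Section BruhatStep.
Variable n : nat.
Implicit Types (x y : 'S_n) (i j : 'I_n).

Lemma bruhat_step_tperm x i j : i < j -> x i < x j -> bruhat_step x (tperm i j * x).
Proof.
move=> lt_ij lt_xij; exists i, j; split; first by rewrite neq_ltn lt_ij.
by split=> [k|]; [rewrite permM | exact: plen_tperm_mul].
Qed.

Lemma bruhat_stepP x y :
  bruhat_step x y -> exists i j, [/\ i < j, x i < x j & y = tperm i j * x].
Proof.
case=> i [j [ne_ij [yE lt_len]]].
have {}yE : y = tperm i j * x by apply/permP=> k; rewrite permM yE.
case: (ltngtP i j) => [lt_ij|lt_ji|/val_inj eq_ij]; last by rewrite eq_ij eqxx in ne_ij.
- by exists i, j; rewrite -(plen_tperm_mulE x lt_ij) -yE.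
- by rewrite tpermC in yE; exists j, i; rewrite -(plen_tperm_mulE x lt_ji) -yE.
Qed.

Lemma bruhat_le_refl x : bruhat_le x x.
Proof. exact: rt_refl. Qed.

Lemma bruhat_step_le x y : bruhat_step x y -> bruhat_le x y.
Proof. exact: rt_step. Qed.

Lemma bruhat_le_trans x y z : bruhat_le x y -> bruhat_le y z -> bruhat_le x z.
Proof. exact: rt_trans. Qed.

Lemma bruhat_step_plen x y : bruhat_step x y -> plen x < plen y.
Proof. by case=> i [j [_ [_ ]]]. Qed.

End BruhatStep.

Section Standardization.
Variable n : nat.
Implicit Types (g : compo n) (w x y : 'S_n) (i j k p q : 'I_n).

Lemma cact_eqE (v g : compo n) w k : cact v w = g -> v (w k) = g k.
Proof. by move=> <-; rewrite ffunE. Qed.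

Lemma cact_tpermK (v : compo n) i j : cact (cact v (tperm i j)) (tperm i j) = v.
Proof. by apply/ffunP => k; rewrite !ffunE tpermK. Qed.

Lemma cact_tperm_id (v : compo n) i j : v i = v j -> cact v (tperm i j) = v.
Proof. by move=> eq_v; apply/ffunP => k; rewrite ffunE; case: tpermP => [->|->|//]. Qed.

Lemma geq_trans : transitive geq.
Proof. by move=> a b c ba cb; apply: leq_trans cb ba. Qed.

Lemma lam_cact g w : lam (cact g w) = lam g.
Proof.
apply/ffunP=> i; rewrite !ffunE; congr nth.
apply/perm_sortP => [a b|||]; [exact: leq_total | exact: geq_trans | |].
  by move=> a b ab; apply/anti_leq; rewrite andbC.
have -> : codom (cact g w) = map g (codom w).
  by rewrite [LHS]codomE [codom w]codomE -[RHS]map_comp; apply: eq_map => k; rewrite ffunE.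
rewrite [X in perm_eq _ X]codomE perm_map // uniq_perm ?enum_uniq // => [|k].
  by rewrite codomE map_inj_uniq ?enum_uniq //; apply: perm_inj.
by rewrite perm_onto mem_enum.
Qed.

Lemma lam_antitone g i j : i <= j -> lam g j <= lam g i.
Proof.
move=> le_ij; rewrite !ffunE.
apply: (sorted_leq_nth geq_trans leqnn) => //.
  by apply: sort_sorted => a b; apply: leq_total.
all: by rewrite inE size_sort size_codom card_ord.
Qed.

Lemma cact_lam_exists g : exists w, cact (lam g) w = g.
Proof.
pose t := [tuple g i | i < n].
have /tuple_permP[p tE] : perm_eq (sort geq (codom g)) t.
  by rewrite perm_sort codomE /t /= enumT unlock.
exists p^-1; apply/ffunP => k; rewrite !ffunE tE.
rewrite (nth_map (p^-1 k)) ?size_enum_ord //.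
by rewrite -tnth_nth tnth_ord_tuple /t tnth_mktuple permKV.
Qed.

Lemma wperm_minperm g : is_minperm g (wperm g).
Proof.
rewrite /wperm; case: pickP => [w // | no_min].
have [w0 /eqP w0E] := cact_lam_exists g.
case: (@arg_minnP _ w0 (fun w => cact (lam g) w == g) (@plen n) w0E) => w wE w_min.
by move: (no_min w); rewrite /is_minperm wE; case/forallP => w' /=; apply/implyP/w_min.
Qed.

Definition stable g w := forall p q, p < q -> g p = g q -> w p < w q.

Lemma minperm_stable g w : is_minperm g w -> stable g w.
Proof.
move=> /andP[/eqP/ffunP wE /forallP w_min] p q lt_pq eq_g.
have {}wE k : lam g (w k) = g k by have := wE k; rewrite ffunE.
case: (ltngtP (w p) (w q)) => // [gt_w|/val_inj/perm_inj eq_w]; last first.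
  by move: lt_pq; rewrite eq_w ltnn.
pose w' := tperm p q * w.
have w'E : cact (lam g) w' = g.
  by apply/ffunP=> k; rewrite ffunE permM wE; case: tpermP => [->|->|//]; rewrite eq_g.
have := plen_tperm_mul (x := w') lt_pq; rewrite !permM tpermL tpermR tpermKg.
by move=> /(_ gt_w); move: (w_min w'); rewrite w'E eqxx /=; lia.
Qed.

Lemma cact_lam_ltn g w i j : cact (lam g) w = g -> g i < g j -> w j < w i.
Proof.
move=> /cact_eqE wE lt_g; rewrite ltnNge; apply/negP => /(lam_antitone g).
by rewrite !wE leqNgt lt_g.
Qed.

Lemma stable_ltnE g w i j : cact (lam g) w = g -> stable g w ->
  (w i < w j) = (g j < g i) || (g i == g j) && (i < j).
Proof.
move=> wE w_stable; case: (ltngtP (g j) (g i)) => [lt_g|lt_g|eq_g] /=.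
- exact: cact_lam_ltn wE lt_g.
- by apply/negbTE; rewrite -leqNgt ltnW // (cact_lam_ltn wE lt_g).
- case: (ltngtP i j) => [lt_ij|lt_ji|/val_inj ->]; last exact: ltnn.
    exact: w_stable.
  by apply/negbTE; rewrite -leqNgt ltnW // w_stable.
Qed.

Lemma wperm_cact g : cact (lam g) (wperm g) = g.
Proof. by case/andP: (wperm_minperm g) => /eqP. Qed.

Lemma wperm_stable g : stable g (wperm g).
Proof. exact/minperm_stable/wperm_minperm. Qed.

Lemma wpermE g w : cact (lam g) w = g -> stable g w -> wperm g = w.
Proof.
move=> wE w_stable; apply: perm_ltn_eq => i j.
by rewrite (stable_ltnE i j (wperm_cact g) (@wperm_stable g)) (stable_ltnE i j wE w_stable).
Qed.

Lemma wperm_ltnE g i j : i < j -> (wperm g i < wperm g j) = (g j <= g i).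
Proof.
move=> lt_ij; rewrite (stable_ltnE i j (wperm_cact g) (@wperm_stable g)) lt_ij andbT.
by rewrite orbC eq_sym -leq_eqVlt.
Qed.

End Standardization.

Section AdjacentTransposition.
Variables (n : nat) (r r1 : 'I_n).
Hypothesis r1E : nat_of_ord r1 = r.+1.
Local Notation s := (tperm r r1).
(* (s * x) k = x (s k), so s * x is the product x s_r and ascent x means l(x) < l(x s_r). *)
Local Notation ascent x := (x%g r < x%g r1).
Implicit Types (x y u m w : 'S_n) (i j : 'I_n) (g b v : compo n).

Lemma ltn_adj : r < r1.
Proof. by rewrite r1E. Qed.

Lemma tperm_adj_ltn i j : i < j -> (i, j) != (r, r1) -> s i < s j.
Proof.
move=> lt_ij; rewrite xpair_eqE -!val_eqE /= !nat_of_tperm r1E.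
by move=> ne; repeat case: ifP => [/eqP ?|/negbT ?]; lia.
Qed.

Lemma ascent_tperm x : ascent (s * x) = ~~ ascent x.
Proof.
rewrite !permM tpermL tpermR; case: ltngtP => // /val_inj/perm_inj eq_r.
by move: ltn_adj; rewrite eq_r ltnn.
Qed.

Lemma bruhat_step_asc x : ascent x -> bruhat_step x (s * x).
Proof. exact/bruhat_step_tperm/ltn_adj. Qed.

Lemma bruhat_step_desc x : ~~ ascent x -> bruhat_step (s * x) x.
Proof.
by move=> desc_x; rewrite -{2}(tpermKg r r1 x); apply: bruhat_step_asc; rewrite ascent_tperm.
Qed.

Lemma bruhat_step_tperm_mul m w :
  bruhat_step m w -> w != s * m -> bruhat_step (s * m) (s * w).
Proof.
case/bruhat_stepP=> i [j [lt_ij lt_m ->]] ne.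
have ne_ij : (i, j) != (r, r1) by apply: contraNneq ne => -[-> ->].
rewrite tperm_mulJ; apply: bruhat_step_tperm; first exact: tperm_adj_ltn.
by rewrite !permM !tpermK.
Qed.

Lemma bruhat_step_lift_eq m w :
  bruhat_step m w -> ascent m = ascent w -> bruhat_step (s * m) (s * w).
Proof.
move=> st eq_asc; apply: bruhat_step_tperm_mul st _.
by apply/eqP=> eq_w; move: eq_asc; rewrite eq_w ascent_tperm; case: (m r < m r1).
Qed.

Lemma bruhat_step_lift_asc m w : bruhat_step m w -> ascent m -> bruhat_le m (s * w).
Proof.
move=> st asc_m; have [->|ne] := eqVneq w (s * m).
  by rewrite tpermKg; apply: bruhat_le_refl.
apply: bruhat_le_trans (bruhat_step_le (bruhat_step_asc asc_m)) _.
exact/bruhat_step_le/bruhat_step_tperm_mul.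
Qed.

(* Induction on the last step m -> w of a chain from u to w; the case where
   u and w are ascents but m is not needs the claim for s * m, which is shorter
   than w but not on the chain, hence the induction on the length of w. *)
Lemma bruhat_lifting u w : bruhat_le u w ->
  (ascent u = ascent w -> bruhat_le (s * u) (s * w)) /\
  (ascent u -> ~~ ascent w -> bruhat_le u (s * w)).
Proof.
have [N lt_wN] := ubnP (plen w); elim: N u w lt_wN => // N IH u w lt_wN.
move=> /clos_rt_rtn1_iff le_uw; case: le_uw lt_wN => {w} [|m w st le_um] lt_wN.
  by split=> [_|->]; first exact: bruhat_le_refl.
have {}le_um : bruhat_le u m by apply/clos_rt_rtn1_iff.
have lt_mN : plen m < N := leq_trans (bruhat_step_plen st) lt_wN.
have [IH_eq IH_asc] := IH u m lt_mN le_um.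
split=> [|asc_u desc_w].
- case asc_u: (ascent u); case asc_m: (ascent m); case asc_w: (ascent w) => // _.
  + apply: bruhat_le_trans (IH_eq _) (bruhat_step_le (bruhat_step_lift_eq st _));
      by rewrite ?asc_u ?asc_m ?asc_w.
  + have desc_m : ~~ ascent m by rewrite asc_m.
    have lt_smN : plen (s * m) < N.
      exact: ltn_trans (bruhat_step_plen (bruhat_step_desc desc_m)) lt_mN.
    have [IH_sm _] := IH u (s * m) lt_smN (IH_asc asc_u desc_m).
    have le_su_m : bruhat_le (s * u) m.
      by rewrite -[m](tpermKg r r1); apply: IH_sm; rewrite ascent_tperm asc_u asc_m.
    apply: bruhat_le_trans le_su_m (bruhat_le_trans (bruhat_step_le st) _).
    by apply/bruhat_step_le/bruhat_step_asc; rewrite asc_w.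
  + apply: bruhat_le_trans (bruhat_step_le (bruhat_step_desc _)) _; first by rewrite asc_u.
    by apply: bruhat_le_trans le_um (bruhat_step_lift_asc st _); rewrite asc_m.
  + apply: bruhat_le_trans (IH_eq _) (bruhat_step_le (bruhat_step_lift_eq st _));
      by rewrite ?asc_u ?asc_m ?asc_w.
- case asc_m: (ascent m).
    exact: bruhat_le_trans le_um (bruhat_step_lift_asc st asc_m).
  apply: bruhat_le_trans (IH_asc asc_u _) (bruhat_step_le (bruhat_step_lift_eq st _)).
    by rewrite asc_m.
  by rewrite asc_m (negbTE desc_w).
Qed.

Lemma bruhat_le_desc_lift w x : ~~ ascent w -> bruhat_le x w ->
  bruhat_le (if ascent x then x else s * x) (s * w).
Proof.
move=> desc_w /bruhat_lifting[lift_eq lift_asc].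
case: ifP => [asc_x|desc_x]; first exact: lift_asc.
by apply: lift_eq; rewrite desc_x (negbTE desc_w).
Qed.

Lemma bruhat_le_desc_drop w x : ~~ ascent w -> bruhat_le x (s * w) -> bruhat_le (s * x) w.
Proof.
move=> desc_w le_x; have [asc_x|desc_x] := boolP (ascent x).
  have [lift_eq _] := bruhat_lifting le_x.
  by rewrite -[w](tpermKg r r1); apply: lift_eq; rewrite ascent_tperm asc_x.
apply: bruhat_le_trans (bruhat_step_le (bruhat_step_desc desc_x)) _.
exact: bruhat_le_trans le_x (bruhat_step_le (bruhat_step_desc desc_w)).
Qed.

Lemma wperm_cact_adj g : g r != g r1 -> wperm (cact g s) = s * wperm g.
Proof.
move=> ne_g; apply: wpermE => [|p q lt_pq].
  apply/ffunP => k.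
  by rewrite lam_cact [LHS]ffunE permM (cact_eqE _ (wperm_cact g)) ffunE.
rewrite !ffunE !permM => eq_g.
have ne_pq : (p, q) != (r, r1).
  apply: contraNneq ne_g => -[eq_p eq_q].
  by move: eq_g; rewrite eq_p eq_q tpermL tpermR => ->.
exact: wperm_stable (tperm_adj_ltn lt_pq ne_pq) eq_g.
Qed.

Section Descent.
Variable g : compo n.
Hypothesis lt_g : g r < g r1.

Lemma wperm_desc : ~~ ascent (wperm g).
Proof. by rewrite wperm_ltnE ?ltn_adj // -ltnNge. Qed.

Lemma wperm_cact_desc : wperm (cact g s) = s * wperm g.
Proof. by apply: wperm_cact_adj; rewrite neq_ltn lt_g. Qed.

Lemma comp_le_cact_lift b :
  comp_le b g -> comp_le b (cact g s) \/ exists v, comp_le v (cact g s) /\ b = cact v s.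
Proof.
move=> [lam_b le_b]; have := bruhat_le_desc_lift wperm_desc le_b.
rewrite -wperm_cact_desc; case: ifP => [asc_b|desc_b] le_b'.
  by left; split; rewrite ?lam_cact.
have lt_b : b r < b r1 by rewrite ltnNge -wperm_ltnE ?ltn_adj ?desc_b.
right; exists (cact b s); rewrite cact_tpermK; split=> //.
by split; rewrite ?lam_cact // wperm_cact_adj // neq_ltn lt_b.
Qed.

Lemma comp_le_cact_drop b : comp_le b (cact g s) -> comp_le b g /\ comp_le (cact b s) g.
Proof.
rewrite /comp_le !lam_cact => -[lam_b le_b].
have le_g : bruhat_le (wperm (cact g s)) (wperm g).
  by rewrite wperm_cact_desc; apply/bruhat_step_le/bruhat_step_desc/wperm_desc.
split; split=> //; first exact: bruhat_le_trans le_b le_g.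
have [/cact_tperm_id -> | ne_b] := eqVneq (b r) (b r1).
  exact: bruhat_le_trans le_b le_g.
rewrite wperm_cact_adj //; apply: bruhat_le_desc_drop wperm_desc _.
by rewrite -wperm_cact_desc.
Qed.

End Descent.

End AdjacentTransposition.

Theorem proposition4p3 (n : nat) (alpha : compo n) (r r1 : ordinal n)
  (hr : val r1 = (val r).+1) (hlt : alpha r < alpha r1) :
  let alpha' := cact alpha (tperm r r1) in
  forall beta : compo n,
    Vset alpha beta <->
    (Vset alpha' beta \/ exists v : compo n, Vset alpha' v /\ beta = cact v (tperm r r1)).
Proof.
move=> alpha' beta; split; first exact: comp_le_cact_lift.
case=> [le_beta | [v [le_v ->]]].
  by case: (comp_le_cact_drop hr hlt le_beta).
by case: (comp_le_cact_drop hr hlt le_v).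
Qed.
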